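(* Let $F$ be a field of characteristic zero, $G$ a finite group, $A$ a $G$-graded PI-algebra, $n$ a positive integer, and let $\mathcal{U}(n;A)\subseteq M_n(\mathcal{U}_G(A))$ be the algebra generated by the generic matrices $\xi_k^{(g)}=(x_{ij,k}^{(g)}+T_G(A))_{1\le i,j\le n}$, $k\in\mathbb{N}$, $g\in G$. Let $f_1,\dots,f_n\in\mathcal{U}(n;A)$, fix $k\in\{1,\dots,n\}$, and let $f_i^k$ denote the $k$-th column of $f_i$ (a column vector with entries in $\mathcal{U}_G(A)$). Then $\{f_1^k,\dots,f_n^k\}$ is linearly independent over $F$ if and only if $\{f_1,\dots,f_n\}$ is linearly independent over $F$.
   Context: All algebras are associative and unitary. The $x_{ij,k}^{(g)}$ are pairwise distinct free variables of degree $g$. $F\langle X\rangle$ is the free associative algebra on a disjoint union $X=\bigcup_{g\in G}X^g$ of countable sets of variables of degree $g$, naturally $G$-graded. For a $G$-graded algebra $A$, $T_G(A)$ is its ideal of graded polynomial identities and $\mathcal{U}_G(A)=F\langle X\rangle/T_G(A)$ its relatively free $G$-graded algebra. *)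

From HB Require Import structures.
From mathcomp Require Import all_boot all_order all_algebra all_fingroup.
From mathcomp Require Import finmap.
From mathcomp.multinomials Require Import monalg.
Set Implicit Arguments. Unset Strict Implicit. Unset Printing Implicit Defensive.
Import GRing.Theory.
Local Open Scope ring_scope.

(* Free associative unital algebra F<V> on a set of variables V:       *)
Definition FreeAlg (F : fieldType) (V : choiceType) := {malg F[{fmonom V}]}.

Definition fvar (F : fieldType) (V : choiceType) (v : V) : FreeAlg F V :=
  mkmalgU (fmu v) 1.

Definition feval (F : fieldType) (V : choiceType) (A : algType F) (s : V -> A)
   (p : FreeAlg F V) : A :=
  \sum_(m <- msupp p) p@_m *: \prod_(v <- fmonom_val m) s v.

Definition is_grading (F : fieldType) (gT : finGroupType) (A : algType F)
    (gr : gT -> A -> Prop) : Prop :=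
  [/\ (forall g, gr g 0),
      (forall g a b, gr g a -> gr g b -> gr g (a + b)),
      (forall g (c : F) a, gr g a -> gr g (c *: a)) &
  [/\ (forall g h a b, gr g a -> gr h b -> gr (g * h)%g (a * b)),

      (forall a : A, exists e : gT -> A, (forall g, gr g (e g)) /\ a = \sum_g e g)
    & (forall e : gT -> A, (forall g, gr g (e g)) -> \sum_g e g = 0 ->
         forall g, e g = 0)]].

Definition is_PI (F : fieldType) (A : algType F) : Prop :=
  exists f : FreeAlg F nat, f != 0 /\ forall s : nat -> A, feval s f = 0.

(* Graded variables: X = disjoint union of the X^g, X^g = {g} x N^3,   *)
(* the variable (g,(i,j,k)) being x_{ij,k}^{(g)}, of degree g.          *)
Definition gvar (gT : finGroupType) : choiceType := (gT * (nat * nat * nat))%type.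

Definition FX (F : fieldType) (gT : finGroupType) := FreeAlg F (gvar gT).

Definition graded_subst (F : fieldType) (gT : finGroupType) (A : algType F)
    (gr : gT -> A -> Prop) (s : gvar gT -> A) : Prop :=
  forall v : gvar gT, gr v.1 (s v).

Definition TG (F : fieldType) (gT : finGroupType) (A : algType F)
    (gr : gT -> A -> Prop) (p : FX F gT) : Prop :=
  forall s, graded_subst gr s -> feval s p = 0.

(* Generic matrices xi_k^(g) = (x_{ij,k}^(g))_{i,j}  (indices 0-based) *)
Definition generic_mx (F : fieldType) (gT : finGroupType) (n : nat)
    (g : gT) (k : nat) : 'M[FX F gT]_n :=
  \matrix_(i < n, j < n) fvar F (g, (nat_of_ord i, nat_of_ord j, k)).

(* Its image in M_n(U_G(A)) = M_n(F<X>/T_G(A)) is U(n;A); so elements of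
   U(n;A) are represented by elements of this subalgebra. *)
Inductive gen_by_generic (F : fieldType) (gT : finGroupType) (n : nat) :
    'M[FX F gT]_n -> Prop :=
| GenXi g k : gen_by_generic (generic_mx F n g k)
| GenScal (c : F) : gen_by_generic ((c%:MP : FX F gT)%:M)
| GenAdd M N : gen_by_generic M -> gen_by_generic N -> gen_by_generic (M + N)
| GenMul M N : gen_by_generic M -> gen_by_generic N -> gen_by_generic (M *m N).

(* Linear independence over F of the family f_1..f_m of p x q matrices
   over U_G(A) = F<X>/T_G(A), stated on representatives: a vanishing
   F-linear combination in M_{p,q}(U_G(A)) means every entry of the
   combination lies in T_G(A). *)
Definition lin_indep_modTG (F : fieldType) (gT : finGroupType) (A : algType F)
    (gr : gT -> A -> Prop) (m p q : nat) (f : 'I_m -> 'M[FX F gT]_(p, q)) : Prop :=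
  forall c : 'I_m -> F,
    (forall i j, TG gr (\sum_(l < m) c l *: f l i j)) -> forall l, c l = 0.

From HB Require Import structures.
From mathcomp Require Import all_boot all_order all_algebra all_fingroup.
From mathcomp Require Import finmap.
From mathcomp.multinomials Require Import monalg.
Set Implicit Arguments. Unset Strict Implicit. Unset Printing Implicit Defensive.
Import GRing.Theory.
Local Open Scope ring_scope.

(** A permutation σ of the index set {0..n-1} induces the degree-preserving
    relabelling x_{ij,k}^(g) |-> x_{σ(i)σ(j),k}^(g) of the variables, which maps
    T_G(A) into itself and conjugates every generic matrix by the permutation
    matrix of σ, hence also every element of the algebra they generate.  For an
    F-linear combination h of f_1..f_n, the entry h_{ij} is therefore the image
    of h_{σ(i)σ(j)} under a graded substitution; taking σ = (k j) moves column k
    onto column j.  So if the k-th column of h lies in T_G(A), all of h does,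
    and independence of the k-th columns follows from independence of the f_i. *)

Section FreeAlgEval.
Variables (F : fieldType) (V : choiceType) (A : algType F) (s : V -> A).

Definition fmonom_eval (m : fmonom V) : A := \prod_(v <- fmonom_val m) s v.

Lemma fmonom_eval_is_multiplicative : mmorphism fmonom_eval.
Proof.
split; last by rewrite /fmonom_eval fm1 big_nil.
by move=> x y; rewrite /fmonom_eval fmM big_cat.
Qed.

HB.instance Definition _ :=
  isMultiplicative.Build (fmonom V) A fmonom_eval fmonom_eval_is_multiplicative.

Lemma fevalE p : feval s p = mmap (in_alg A) fmonom_eval p.
Proof. by rewrite /feval mmapE; apply: eq_bigr => m _; rewrite /= mulr_algl. Qed.

Lemma feval0 : feval s 0 = 0.
Proof. by rewrite fevalE mmap0. Qed.

Lemma fevalD p q : feval s (p + q) = feval s p + feval s q.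
Proof. by rewrite !fevalE mmapD. Qed.

Lemma fevalZ (c : F) p : feval s (c *: p) = c *: feval s p.
Proof. by rewrite !fevalE (mmapZ (f := in_alg A) (h := fmonom_eval)) /= mulr_algl. Qed.

Lemma fevalM p q : feval s (p * q) = feval s p * feval s q.
Proof.
have [|mulM _] := @commr_mmap_is_multiplicative _ _ _ (in_alg A) fmonom_eval.
  by move=> ? ? ?; apply: comm_alg.
by rewrite !fevalE mulM.
Qed.

Lemma fevalC (c : F) : feval s c%:MP = c%:A.
Proof. by rewrite fevalE (mmapC (f := in_alg A) (h := fmonom_eval)). Qed.

Lemma feval_var v : feval s (fvar F v) = s v.
Proof. by rewrite fevalE /fvar mmapU /= scale1r mul1r /fmonom_eval fmuE big_seq1. Qed.

Lemma feval_sum (I : Type) (r : seq I) (P : pred I) (G : I -> FreeAlg F V) :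
  feval s (\sum_(i <- r | P i) G i) = \sum_(i <- r | P i) feval s (G i).
Proof. by rewrite fevalE raddf_sum; apply: eq_bigr => i _; rewrite fevalE. Qed.

End FreeAlgEval.

Section IndexPermutation.
Variables (F : fieldType) (gT : finGroupType) (A : algType F) (n : nat).
Variable σ : {perm 'I_n}.

(* σ acts on the nat-valued indices of the variables, as the identity outside [0, n). *)
Definition perm_idx (a : nat) : nat := oapp (fun i : 'I_n => val (σ i)) a (insub a).

Lemma perm_idx_ord (i : 'I_n) : perm_idx i = σ i.
Proof. by rewrite /perm_idx valK. Qed.

Definition perm_gvar (v : gvar gT) : gvar gT :=
  (v.1, (perm_idx v.2.1.1, perm_idx v.2.1.2, v.2.2)).

Definition perm_invariant (M : 'M[FX F gT]_n) : Prop :=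
  forall (s : gvar gT -> A) i j,
    feval s (M (σ i) (σ j)) = feval (s \o perm_gvar) (M i j).

Lemma gen_by_generic_perm_invariant M : gen_by_generic M -> perm_invariant M.
Proof.
elim=> {M} [g k | c | M N _ IHM _ IHN | M N _ IHM _ IHN] s i j.
- by rewrite !mxE !feval_var /perm_gvar /= !perm_idx_ord.
- rewrite !mxE (inj_eq perm_inj).
  by case: (i == j); rewrite ?mulr1n ?mulr0n ?fevalC ?feval0.
- by rewrite !mxE !fevalD IHM IHN.
- rewrite !mxE !feval_sum (reindex_inj (@perm_inj _ σ)) /=.
  by apply: eq_bigr => l _; rewrite !fevalM IHM IHN.
Qed.

Lemma perm_invariant_lincomb m (c : 'I_m -> F) (f : 'I_m -> 'M[FX F gT]_n) :
  (forall l, perm_invariant (f l)) ->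
  perm_invariant (\matrix_(a, b) \sum_(l < m) c l *: f l a b).
Proof.
move=> finv s i j; rewrite !mxE !feval_sum; apply: eq_bigr => l _.
by rewrite !fevalZ finv.
Qed.

Lemma TG_perm_entry (gr : gT -> A -> Prop) M i j :
  perm_invariant M -> TG gr (M i j) -> TG gr (M (σ i) (σ j)).
Proof.
move=> Minv TGij s s_gr; rewrite Minv.
by apply: TGij => v; apply: (s_gr (perm_gvar v)).
Qed.

End IndexPermutation.

Lemma lin_indep_modTG_of_col (F : fieldType) (gT : finGroupType) (A : algType F)
    (gr : gT -> A -> Prop) m p q (f : 'I_m -> 'M[FX F gT]_(p, q)) (k : 'I_q) :
  lin_indep_modTG gr (fun l => col k (f l)) -> lin_indep_modTG gr f.
Proof.
move=> indep_col c TGc; apply: indep_col => i j.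
by under eq_bigr do rewrite mxE; apply: TGc.
Qed.

Theorem corollary6p2 (F : fieldType) (gT : finGroupType) (A : algType F)
    (gr : gT -> A -> Prop) (n : nat) (f : 'I_n -> 'M[FX F gT]_n) (k : 'I_n) :
  [pchar F] =i pred0 ->
  is_grading gr ->
  is_PI A ->
  (0 < n)%N ->
  (forall i, gen_by_generic (f i)) ->
  (lin_indep_modTG gr (fun i => col k (f i)) <-> lin_indep_modTG gr f).
Proof.
move=> _ _ _ _ f_gen; split; first exact: lin_indep_modTG_of_col.
move=> indep_f c TG_col; apply: indep_f => i j.
pose h : 'M[FX F gT]_n := \matrix_(a, b) \sum_(l < n) c l *: f l a b.
have TG_hk a : TG gr (h a k).
  by rewrite mxE; have := TG_col a ord0; under eq_bigr do rewrite mxE.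
have h_inv (σ : {perm 'I_n}) : perm_invariant A σ h.
  by apply: perm_invariant_lincomb => l; apply: gen_by_generic_perm_invariant.
pose σ := tperm k j.
have -> : \sum_(l < n) c l *: f l i j = h (σ (σ i)) (σ k).
  by rewrite tpermK tpermL mxE.
exact: TG_perm_entry (h_inv σ) (TG_hk _).
Qed.
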